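(* Let $\Delta$ be a triangle, $v$ a vertex, and $(\xi_m)_{m\ge0}$ the associated sequence of partitions of the angular interval $I$ at $v$. Let $n\ge0$, $c\ge1$ be integers, let $J$ be an interval of the partition $\xi_n$, and let $S$ be the set of cutting points of $\xi_{n+c}$ lying in the interior of $J$. If $|S|\ge 4+2c$, then there exist three points $x_p,x_q,x_r\in S$ which are in good position.
   Context: Let $\Delta$ be a triangle and $v$ a vertex of $\Delta$. Identify the set of directions (rays) emanating from $v$ into $\Delta$ with an interval $I$ via angular coordinate. A generalized diagonal is a billiard orbit segment from a vertex to a vertex; its length is its number of reflections. A direction $x\in I$ whose billiard trajectory from $v$ is a generalized diagonal (reaches a vertex) is assigned an index, namely the length of that generalized diagonal; we write $x_p$ for such a point of index $p$. The partition $\xi_m$ of $I$ is the partition into subintervals whose cutting points are exactly the directions of index at most $m$ (so $\xi_0$ is essentially the trivial partition, and $\xi_{m+1}$ refines $\xi_m$ with at most one new cutting point inside each interval of $\xi_m$). Three cutting points $x_p,x_q,x_r$ with indices $p<q<r$ are in good position if (1) $x_r$ lies strictly between $x_p$ and $x_q$, and (2) the open interval bounded by $x_p$ and $x_q$ contains no cutting point of index $\le r$ other than $x_r$. *)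

From Stdlib Require Import Reals List.
Open Scope R_scope.

Definition pt := (R * R)%type.

Definition padd (P Q : pt) : pt := (fst P + fst Q, snd P + snd Q).
Definition psub (P Q : pt) : pt := (fst P - fst Q, snd P - snd Q).
Definition pscale (k : R) (P : pt) : pt := (k * fst P, k * snd P).
Definition dot (P Q : pt) : R := fst P * fst Q + snd P * snd Q.
Definition cross (P Q : pt) : R := fst P * snd Q - snd P * fst Q.
Definition pnorm (P : pt) : R := sqrt (dot P P).
Definition rot90 (P : pt) : pt := (- snd P, fst P).

Definition nondeg (A B C : pt) : Prop := cross (psub B A) (psub C A) <> 0.

Definition in_tri (A B C P : pt) : Prop :=
  exists a b c, 0 <= a /\ 0 <= b /\ 0 <= c /\ a + b + c = 1 /\
    P = padd (pscale a A) (padd (pscale b B) (pscale c C)).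

Definition is_vertex (A B C Q : pt) : Prop := Q = A \/ Q = B \/ Q = C.

Definition on_seg (V1 V2 Q : pt) : Prop :=
  exists t, 0 <= t <= 1 /\ Q = padd V1 (pscale t (psub V2 V1)).

Definition reflect (w d : pt) : pt :=
  psub (pscale (2 * dot d w / dot w w) w) d.

Definition exit_pt (A B C P d Q : pt) : Prop :=
  exists t, 0 < t /\ Q = padd P (pscale t d) /\ in_tri A B C Q /\
    forall s, t < s -> ~ in_tri A B C (padd P (pscale s d)).

Definition bounce (A B C Q d d' : pt) : Prop :=
  (on_seg A B Q /\ d' = reflect (psub B A) d) \/
  (on_seg B C Q /\ d' = reflect (psub C B) d) \/
  (on_seg C A Q /\ d' = reflect (psub A C) d).

(** Angular coordinate at the vertex v = A: theta = 0 is the direction of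
    side AB, theta increases towards side AC. *)
Definition orient (A B C : pt) : R :=
  if Rlt_dec 0 (cross (psub B A) (psub C A)) then 1 else -1.
Definition e1 (A B : pt) : pt := pscale (/ pnorm (psub B A)) (psub B A).
Definition dir (A B C : pt) (theta : R) : pt :=
  padd (pscale (cos theta) (e1 A B))
       (pscale (sin theta * orient A B C) (rot90 (e1 A B))).

(** The interval I of directions from A into the triangle (= [0, angle at A]). *)
Definition in_I (A B C : pt) (theta : R) : Prop :=
  0 <= theta <= PI /\ 0 <= orient A B C * cross (dir A B C theta) (psub C A).

(** The direction theta has index p: the billiard trajectory from A in
    direction theta reaches a vertex after exactly p reflections
    (P k = k-th point of the trajectory, D k = direction leaving P k). *)
Definition has_index (A B C : pt) (theta : R) (p : nat) : Prop :=
  in_I A B C theta /\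
  exists (P D : nat -> pt),
    P 0%nat = A /\ D 0%nat = dir A B C theta /\
    (forall k, (k <= p)%nat -> exit_pt A B C (P k) (D k) (P (S k))) /\
    (forall k, (1 <= k <= p)%nat ->
        ~ is_vertex A B C (P k) /\ bounce A B C (P k) (D (pred k)) (D k)) /\
    is_vertex A B C (P (S p)).

(** Cutting points of the partition xi_m: directions of index at most m. *)
Definition cut (A B C : pt) (m : nat) (theta : R) : Prop :=
  exists p, (p <= m)%nat /\ has_index A B C theta p.

Definition partition_interval (A B C : pt) (n : nat) (a b : R) : Prop :=
  cut A B C n a /\ cut A B C n b /\ a < b /\
  forall y, a < y < b -> ~ cut A B C n y.

Definition strictly_between (x z y : R) : Prop :=
  (x < y /\ y < z) \/ (z < y /\ y < x).

Definition good_position (A B C : pt) (xp xq xr : R) (p q r : nat) : Prop :=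
  (p < q < r)%nat /\
  has_index A B C xp p /\ has_index A B C xq q /\ has_index A B C xr r /\
  strictly_between xp xq xr /\
  forall y, strictly_between xp xq y -> cut A B C r y -> y = xr.

From Stdlib Require Import Reals List Lra Lia Classical ClassicalEpsilon.
Open Scope R_scope.

(* Between two directions of the same index r >= 1 there is a direction of smaller
   index.  Unfold the triangle along the sides met by the two billiard paths.  If they
   meet the same r sides, both are straight rays from v to the same image of a vertex,
   which forces equal directions.  Otherwise, at
   the first step where they meet different sides, the vertex shared by these two sides
   lies inside the cone spanned by the two rays, and the ray aimed at it is a billiard
   path that follows the common sides and ends at that vertex earlier.

   Consequently, inside an interval J of xi_n, two new cutting points of xi_(m+1) are
   separated by a cutting point of xi_m, so each xi_(n+j) has finitely many cutting points
   in J.  Call the rank of a point its least index.  For a fixed rank r, at most one point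
   of S lacks a cutting point of xi_(r-1) in J to its left, and at most one lacks one to
   its right; as |S| > 2c, some x in S of rank r has such points on both sides, and the
   nearest ones, x_p and x_q, are in good position with x. *)

Inductive vtx := VA | VB | VC.

Definition vnext (v : vtx) : vtx := match v with VA => VB | VB => VC | VC => VA end.

Lemma vtx_eq_dec (u v : vtx) : {u = v} + {u <> v}.
Proof. decide equality. Defined.

Lemma vtx_cases3 (v s s' : vtx) : v <> s -> v <> s' -> s <> s' ->
  forall u, u = v \/ u = s \/ u = s'.
Proof. destruct v, s, s'; intros; try congruence; destruct u; auto. Qed.

Lemma vtx_others v : forall u, u = v \/ u = vnext v \/ u = vnext (vnext v).
Proof. destruct v, u; simpl; auto. Qed.

Lemma vnext_neq v : v <> vnext v /\ v <> vnext (vnext v) /\ vnext v <> vnext (vnext v).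
Proof. destruct v; simpl; repeat split; discriminate. Qed.

Definition agree (s s' : nat -> vtx) (j : nat) : Prop := forall i, (1 <= i <= j)%nat -> s i = s' i.

Lemma agree_sym s s' j : agree s s' j -> agree s' s j.
Proof. intros Ha i Hi. symmetry. auto. Qed.

Lemma first_disagreement (f g : nat -> vtx) r :
  agree f g r \/ exists m, (m < r)%nat /\ agree f g m /\ f (S m) <> g (S m).
Proof.
  induction r as [|r [IH|(m & Hm & Ha & Hd)]].
  - left. intros i Hi. lia.
  - destruct (vtx_eq_dec (f (S r)) (g (S r))) as [E|E].
    + left. intros i Hi. destruct (Nat.eq_dec i (S r)) as [->|]; [exact E | apply IH; lia].
    + right. exists r. auto.
  - right. exists m. split; [lia | auto].
Qed.

(* Only points occurring in the goal are destructed: section variables cannot be cleared. *)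
Ltac unfold_pts :=
  unfold reflect, padd, psub, pscale, cross, dot;
  repeat match goal with
  | P : pt |- _ => lazymatch goal with |- context [P] =>
      let a := fresh "a" in let b := fresh "b" in destruct P as [a b] end
  end; simpl.

Lemma padd_shift O a D t : padd (padd O (pscale a D)) (pscale t D) = padd O (pscale (a + t) D).
Proof. unfold_pts. f_equal; ring. Qed.

Lemma padd_cancel O P Q : padd O P = padd O Q -> P = Q.
Proof. unfold_pts. intro E; injection E; intros; f_equal; lra. Qed.

Lemma reflect_lin w a d1 b d2 :
  reflect w (padd (pscale a d1) (pscale b d2)) = padd (pscale a (reflect w d1)) (pscale b (reflect w d2)).
Proof. unfold_pts. f_equal; unfold Rdiv; ring. Qed.

Lemma reflect_scale w a d : pscale a (reflect w d) = reflect w (pscale a d).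
Proof. unfold_pts. f_equal; unfold Rdiv; ring. Qed.

Lemma reflect_invol w d : dot w w <> 0 -> reflect w (reflect w d) = d.
Proof. unfold dot; unfold_pts; intro; f_equal; field; auto. Qed.

Lemma reflect_fix w d : dot w w <> 0 -> cross w d = 0 -> reflect w d = d.
Proof.
  destruct w as [w1 w2], d as [d1 d2]. unfold reflect, dot, cross, psub, pscale; simpl.
  intros H0 H1. f_equal; apply Rminus_diag_uniq; [
    replace (_ - d1) with (2 * w2 * (w1 * d2 - w2 * d1) / (w1 * w1 + w2 * w2)) by (field; auto) |
    replace (_ - d2) with (- 2 * w1 * (w1 * d2 - w2 * d1) / (w1 * w1 + w2 * w2)) by (field; auto)];
  rewrite H1; unfold Rdiv; ring.
Qed.

(** The point of the segment [[O + a Dx, O + b Dy]] on the ray from [O] along [al Dx + be Dy]. *)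
Lemma segment_meets_ray O Dx Dy a b al be : 0 < a -> 0 < b -> 0 < al -> 0 < be ->
  padd O (pscale (a * b / (al * b + be * a)) (padd (pscale al Dx) (pscale be Dy))) =
  padd (pscale (al * b / (al * b + be * a)) (padd O (pscale a Dx)))
       (pscale (1 - al * b / (al * b + be * a)) (padd O (pscale b Dy))).
Proof. intros. assert (0 < al * b + be * a) by nra. unfold_pts. f_equal; field; lra. Qed.

Lemma small_step_pos l d e : 0 < l -> 0 <= e <= l / (Rabs d + 1) -> 0 < l + e * d.
Proof.
  intros Hl [He0 He]. pose proof (Rabs_pos d). pose proof (Rle_abs (- d)). rewrite Rabs_Ropp in *.
  assert (E : l / (Rabs d + 1) * (Rabs d + 1) = l) by (field; lra).
  assert (e * (Rabs d + 1) <= l) by (rewrite <- E; apply Rmult_le_compat_r; lra).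
  destruct (Req_dec e 0) as [->|]; nra.
Qed.

Lemma small_step_pos2 l1 d1 l2 d2 : 0 < l1 -> 0 < l2 ->
  exists e, 0 < e /\ 0 < l1 + e * d1 /\ 0 < l2 + e * d2.
Proof.
  intros H1 H2. pose proof (Rabs_pos d1). pose proof (Rabs_pos d2).
  assert (0 < l1 / (Rabs d1 + 1)) by (apply Rdiv_lt_0_compat; lra).
  assert (0 < l2 / (Rabs d2 + 1)) by (apply Rdiv_lt_0_compat; lra).
  exists (Rmin (l1 / (Rabs d1 + 1)) (l2 / (Rabs d2 + 1))).
  split; [apply Rmin_glb_lt; auto|].
  split; apply small_step_pos; auto;
    [split; [apply Rmin_glb|apply Rmin_l] | split; [apply Rmin_glb|apply Rmin_r]]; lra.
Qed.

Lemma sum_sq_zero x y : x * x + y * y = 0 -> x = 0 /\ y = 0.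
Proof.
  intro E. assert (Ex : x * x = 0) by nra. assert (Ey : y * y = 0) by nra.
  apply Rmult_integral in Ex, Ey. tauto.
Qed.

Lemma sin_pos_arg t : - PI < t <= PI -> 0 < sin t -> 0 < t.
Proof.
  intros [H1 H2] Hs. apply Rnot_le_lt; intro Ht.
  assert (0 <= sin (- t)) by (apply sin_ge_0; lra). rewrite sin_neg in H. lra.
Qed.

Lemma polar_upper c s : 0 < s -> exists z N, 0 < N /\ 0 <= z <= PI /\ cos z = c / N /\ sin z = s / N.
Proof.
  intro Hs. set (N := sqrt (c * c + s * s)).
  assert (HN2 : N * N = c * c + s * s) by (apply sqrt_sqrt; nra).
  assert (HN : 0 < N) by (apply sqrt_lt_R0; nra).
  assert (Hc : -1 <= c / N <= 1).
  { assert (c * c <= N * N) by nra.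
    split; apply (Rmult_le_reg_r N); auto; unfold Rdiv; rewrite Rmult_assoc, Rinv_l by lra; nra. }
  exists (acos (c / N)), N. split; [exact HN | split; [apply acos_bound | split; [apply cos_acos, Hc|]]].
  rewrite sin_acos by exact Hc.
  replace (1 - (c / N)²) with ((s / N) * (s / N)).
  2:{ unfold Rsqr. transitivity ((N * N - c * c) / (N * N)); [|field; lra].
      replace (N * N - c * c) with (s * s) by lra. field; lra. }
  apply sqrt_square, Rlt_le, Rdiv_lt_0_compat; auto.
Qed.

Lemma pos_solution_2x2 L L' x y : 0 < L -> 0 < L' -> - L' < x < L -> - L < y < L' ->
  exists al be, 0 < al /\ 0 < be /\ L * al + x * be = L /\ y * al + L' * be = L'.
Proof.
  intros HL HL' Hx Hy.
  assert (Hdet : 0 < L * L' - x * y).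
  { destruct (Rle_lt_dec 0 x), (Rle_lt_dec 0 y); nra. }
  exists (L' * (L - x) / (L * L' - x * y)), (L * (L' - y) / (L * L' - x * y)).
  repeat split; try (apply Rdiv_lt_0_compat; nra); field; lra.
Qed.

Lemma ratio_in_01 a b al be : 0 < a -> 0 < b -> 0 < al -> 0 < be -> 0 < al * b / (al * b + be * a) < 1.
Proof.
  intros. assert (0 < al * b + be * a) by nra. split; [apply Rdiv_lt_0_compat; nra|].
  apply (Rmult_lt_reg_r (al * b + be * a)); auto. unfold Rdiv. rewrite Rmult_assoc, Rinv_l by lra. nra.
Qed.

Lemma ray_param_lt a b a' b' al be : 0 < a -> 0 < b -> a < a' -> b < b' -> 0 < al -> 0 < be ->
  a * b / (al * b + be * a) < a' * b' / (al * b' + be * a').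
Proof.
  intros. assert (0 < al * b' + be * a') by nra. assert (0 < al * b + be * a) by nra.
  apply (Rmult_lt_reg_r ((al * b + be * a) * (al * b' + be * a'))); [nra|].
  replace (a * b / (al * b + be * a) * ((al * b + be * a) * (al * b' + be * a')))
    with (a * b * (al * b' + be * a')) by (field; lra).
  replace (a' * b' / (al * b' + be * a') * ((al * b + be * a) * (al * b' + be * a')))
    with (a' * b' * (al * b + be * a)) by (field; lra).
  assert (al * a * b * b' < al * a' * b * b').
  { apply Rmult_lt_compat_r; [lra|]. apply Rmult_lt_compat_r; [lra|]. apply Rmult_lt_compat_l; lra. }
  assert (be * a * a' * b < be * a * a' * b') by (apply Rmult_lt_compat_l; [repeat apply Rmult_lt_0_compat|]; lra).
  nra.
Qed.

(** * Barycentric coordinates in the triangle *)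

Section Triangle.

Variables A B C : pt.
Hypothesis Hnd : nondeg A B C.

Definition vert (v : vtx) : pt := match v with VA => A | VB => B | VC => C end.

(** [bary v P] is the barycentric coordinate of [P] attached to the vertex
    [v]; [dbary v D] is its rate of change along the vector [D]. *)
Definition bary (v : vtx) (P : pt) : R :=
  cross (psub (vert (vnext v)) P) (psub (vert (vnext (vnext v))) P) / cross (psub B A) (psub C A).
Definition dbary (v : vtx) (D : pt) : R :=
  cross (psub (vert (vnext (vnext v))) (vert (vnext v))) D / cross (psub B A) (psub C A).

Ltac coords := generalize Hnd; unfold bary, dbary, vert, vnext, nondeg; unfold_pts; intro.

Lemma bary_shift v P s D : bary v (padd P (pscale s D)) = bary v P + s * dbary v D.
Proof. destruct v; coords; field; assumption. Qed.

Lemma dbary_lin v a D1 b D2 :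
  dbary v (padd (pscale a D1) (pscale b D2)) = a * dbary v D1 + b * dbary v D2.
Proof. destruct v; coords; field; assumption. Qed.

Lemma bary_convex v mu P Q :
  bary v (padd (pscale mu P) (pscale (1 - mu) Q)) = mu * bary v P + (1 - mu) * bary v Q.
Proof. destruct v; coords; field; assumption. Qed.

Lemma bary_comb v O p Dx q Dy :
  bary v (padd O (padd (pscale p Dx) (pscale q Dy))) = bary v O + p * dbary v Dx + q * dbary v Dy.
Proof. destruct v; coords; field; assumption. Qed.

Lemma bary_vert u v : bary v (vert u) = if vtx_eq_dec u v then 1 else 0.
Proof. destruct u, v; simpl; coords; field; assumption. Qed.

Lemma bary_sum3 v s s' P : v <> s -> v <> s' -> s <> s' -> bary v P + bary s P + bary s' P = 1.
Proof. destruct v, s, s'; intros; try congruence; coords; field; assumption. Qed.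

Lemma dbary_sum3 v s s' D : v <> s -> v <> s' -> s <> s' ->
  dbary v D + dbary s D + dbary s' D = 0.
Proof. destruct v, s, s'; intros; try congruence; coords; field; assumption. Qed.

Lemma bary_decomp P :
  P = padd (pscale (bary VA P) A) (padd (pscale (bary VB P) B) (pscale (bary VC P) C)).
Proof. coords; f_equal; field; assumption. Qed.

Lemma bary_inj P Q : (forall v, bary v P = bary v Q) -> P = Q.
Proof. intro E. rewrite (bary_decomp P), (bary_decomp Q), !E. reflexivity. Qed.

Lemma vert_of_zero_bary v s s' P : v <> s -> v <> s' -> s <> s' ->
  bary s P = 0 -> bary s' P = 0 -> vert v = P.
Proof.
  intros n1 n2 n3 Hs Hs'. pose proof (bary_sum3 v s s' P n1 n2 n3).
  apply bary_inj; intro u. rewrite bary_vert.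
  destruct (vtx_cases3 v s s' n1 n2 n3 u) as [ -> | [ -> | -> ]]; destruct vtx_eq_dec; congruence || lra.
Qed.

Lemma in_tri_bary P : in_tri A B C P <-> forall v, 0 <= bary v P.
Proof.
  split.
  - intros (a & b & c & Ha & Hb & Hc & Hs & ->) v.
    replace c with (1 - a - b) by lra.
    enough (bary v (padd (pscale a A) (padd (pscale b B) (pscale (1 - a - b) C))) =
            match v with VA => a | VB => b | VC => 1 - a - b end) as -> by (destruct v; lra).
    destruct v; coords; field; assumption.
  - intro Hl. exists (bary VA P), (bary VB P), (bary VC P).
    repeat split; try apply Hl; [apply bary_sum3; discriminate | apply bary_decomp].
Qed.

Lemma vert_in_tri u : in_tri A B C (vert u).
Proof. apply in_tri_bary; intro v; rewrite bary_vert; destruct vtx_eq_dec; lra. Qed.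

Lemma not_in_tri_bary_neg v Q : bary v Q < 0 -> ~ in_tri A B C Q.
Proof. intros Hl Hi. apply in_tri_bary with (v := v) in Hi. lra. Qed.

Lemma is_vertex_vert Q : is_vertex A B C Q <-> exists u, Q = vert u.
Proof.
  split.
  - intros [E|[E|E]]; [exists VA|exists VB|exists VC]; exact E.
  - intros [[] ->]; unfold is_vertex; simpl; auto.
Qed.

Lemma bary_sum v P : bary v P + bary (vnext v) P + bary (vnext (vnext v)) P = 1.
Proof. destruct (vnext_neq v) as (? & ? & ?). apply bary_sum3; auto. Qed.

Definition on_open_side (v : vtx) (Q : pt) : Prop :=
  bary v Q = 0 /\ forall u, u <> v -> 0 < bary u Q.

Lemma open_side_in_tri v Q : on_open_side v Q -> in_tri A B C Q.
Proof.
  intros [H0 Hpos]. apply in_tri_bary; intro u.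
  destruct (vtx_eq_dec u v) as [->|Hu]; [lra | apply Rlt_le, Hpos, Hu].
Qed.

Lemma open_side_convex v mu P Q : 0 < mu < 1 -> on_open_side v P -> on_open_side v Q ->
  on_open_side v (padd (pscale mu P) (pscale (1 - mu) Q)).
Proof.
  intros Hmu [P0 HP] [Q0 HQ]. split.
  - rewrite bary_convex, P0, Q0. ring.
  - intros u Hu. rewrite bary_convex. specialize (HP u Hu). specialize (HQ u Hu). nra.
Qed.

Definition side_seg (v : vtx) (Q : pt) : Prop := on_seg (vert (vnext v)) (vert (vnext (vnext v))) Q.

Lemma side_seg_bary v Q : side_seg v Q <-> in_tri A B C Q /\ bary v Q = 0.
Proof.
  assert (Hseg : forall t u, bary u (padd (vert (vnext v)) (pscale t (psub (vert (vnext (vnext v))) (vert (vnext v))))) =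
    (1 - t) * bary u (vert (vnext v)) + t * bary u (vert (vnext (vnext v)))).
  { intros t u; destruct u, v; coords; field; assumption. }
  split.
  - intros (t & Ht & ->). split.
    + apply in_tri_bary; intro u. rewrite Hseg, !bary_vert.
      destruct u, v; simpl; lra.
    + rewrite Hseg, !bary_vert. destruct v; simpl; ring.
  - intros [Hi H0]. pose proof (proj1 (in_tri_bary Q) Hi) as Hpos.
    pose proof (bary_sum v Q) as Hs.
    exists (bary (vnext (vnext v)) Q). split; [pose proof (Hpos (vnext v)); pose proof (Hpos (vnext (vnext v))); lra|].
    apply bary_inj; intro u. rewrite Hseg, !bary_vert.
    destruct v, u; simpl in *; lra.
Qed.

Lemma open_side_of_nonvertex v Q : in_tri A B C Q -> bary v Q = 0 -> ~ is_vertex A B C Q ->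
  on_open_side v Q.
Proof.
  intros Hi H0 Hnv. split; [exact H0|]. rewrite in_tri_bary in Hi.
  pose proof (bary_sum v Q) as Hs.
  assert (Hpos : 0 < bary (vnext v) Q /\ 0 < bary (vnext (vnext v)) Q).
  { pose proof (Hi (vnext v)); pose proof (Hi (vnext (vnext v))).
    split; apply Rnot_le_lt; intro Hle; apply Hnv, is_vertex_vert;
      [exists (vnext (vnext v)) | exists (vnext v)];
      apply bary_inj; intro u; rewrite bary_vert; destruct v, u; simpl in *; lra. }
  intros u Hu. destruct (vtx_others v u) as [E|[E|E]]; subst u; tauto.
Qed.

Lemma open_side_nonvertex v Q : on_open_side v Q -> ~ is_vertex A B C Q.
Proof.
  intros [H0 Hpos] Hv. apply is_vertex_vert in Hv as [u ->].
  destruct (vtx_others v u) as [E|[E|E]]; subst u.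
  - rewrite bary_vert in H0. destruct vtx_eq_dec; [lra | congruence].
  - assert (Hw := Hpos (vnext (vnext v)) ltac:(destruct v; discriminate)).
    rewrite bary_vert in Hw. destruct v; simpl in Hw; lra.
  - assert (Hw := Hpos (vnext v) ltac:(destruct v; discriminate)).
    rewrite bary_vert in Hw. destruct v; simpl in Hw; lra.
Qed.

Lemma exit_dbary_neg P D Q v : exit_pt A B C P D Q -> on_open_side v Q -> dbary v D < 0.
Proof.
  intros (t & Ht & EQ & HQ & Hout) [H0 Hpos]. apply Rnot_le_lt; intro Hd.
  destruct (vnext_neq v) as (N1 & N2 & _).
  destruct (small_step_pos2 (bary (vnext v) Q) (dbary (vnext v) D)
              (bary (vnext (vnext v)) Q) (dbary (vnext (vnext v)) D)) as (e & He & E1 & E2);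
    [apply Hpos; auto | apply Hpos; auto |].
  apply (Hout (t + e)); [lra|].
  replace (padd P (pscale (t + e) D)) with (padd Q (pscale e D)) by (rewrite EQ; unfold_pts; f_equal; ring).
  apply in_tri_bary; intro u. rewrite bary_shift.
  destruct (vtx_others v u) as [ -> | [ -> | -> ]]; [rewrite H0; nra | lra | lra].
Qed.

Lemma exit_along_side P D Q v : in_tri A B C P -> bary v P = 0 -> exit_pt A B C P D Q ->
  bary v Q = 0 -> is_vertex A B C Q.
Proof.
  intros HP HvP He HvQ. apply NNPP; intro Hnv.
  pose proof He as (t & Ht & EQ & HQ & _).
  pose proof (exit_dbary_neg P D Q v He (open_side_of_nonvertex v Q HQ HvQ Hnv)).
  rewrite EQ, bary_shift in HvQ. nra.
Qed.

Lemma exit_pt_through_side P D t v : 0 < t -> in_tri A B C (padd P (pscale t D)) ->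
  bary v (padd P (pscale t D)) = 0 -> dbary v D < 0 -> exit_pt A B C P D (padd P (pscale t D)).
Proof.
  intros Ht Hi H0 Hd. exists t. repeat split; auto. intros s Hs.
  apply (not_in_tri_bary_neg v).
  replace (padd P (pscale s D)) with (padd (padd P (pscale t D)) (pscale (s - t) D)) by (unfold_pts; f_equal; ring).
  rewrite bary_shift, H0. nra.
Qed.

Lemma exit_pt_at_vertex P D t v : 0 < t -> vert v = padd P (pscale t D) -> 0 < dbary v D ->
  exit_pt A B C P D (vert v).
Proof.
  intros Ht Ev Hd. exists t. repeat split; auto using vert_in_tri. intros s Hs.
  set (W := padd (vert v) (pscale (s - t) D)).
  replace (padd P (pscale s D)) with W by (unfold W; rewrite Ev; unfold_pts; f_equal; ring).
  assert (Hv : 1 < bary v W) by (unfold W; rewrite bary_shift, bary_vert; destruct vtx_eq_dec; [nra|congruence]).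
  pose proof (bary_sum v W).
  destruct (Rlt_dec (bary (vnext v) W) 0); [apply (not_in_tri_bary_neg (vnext v)) | apply (not_in_tri_bary_neg (vnext (vnext v)))]; lra.
Qed.

Definition side_dir (v : vtx) : pt := psub (vert (vnext (vnext v))) (vert (vnext v)).

Lemma side_dir_nz v : dot (side_dir v) (side_dir v) <> 0.
Proof.
  intro E. assert (Eq : vert (vnext v) = vert (vnext (vnext v))).
  { revert E; unfold side_dir, dot, psub; destruct (vert (vnext v)) as [p1 p2], (vert (vnext (vnext v))) as [q1 q2];
    simpl; intro E. apply sum_sq_zero in E as [E1 E2]. f_equal; lra. }
  pose proof (bary_vert (vnext v) (vnext v)) as E1. rewrite Eq, bary_vert in E1.
  destruct (vtx_eq_dec (vnext v) (vnext v)), (vtx_eq_dec (vnext (vnext v)) (vnext v)); try congruence.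
  - destruct v; discriminate.
  - lra.
Qed.

Lemma side_bary_cross v Q :
  cross (side_dir v) (psub Q (vert (vnext v))) = bary v Q * cross (psub B A) (psub C A).
Proof. unfold side_dir; destruct v; coords; field; assumption. Qed.

Lemma dbary_reflect v D : dbary v (reflect (side_dir v) D) = - dbary v D.
Proof.
  pose proof (side_dir_nz v) as Hw. revert Hw. unfold side_dir; destruct v; coords; intro Hw;
    unfold dot in Hw; field; auto.
Qed.

Definition mirror (v : vtx) (O : pt) : pt :=
  padd (vert (vnext v)) (reflect (side_dir v) (psub O (vert (vnext v)))).

Lemma mirror_fix v Q : bary v Q = 0 -> mirror v Q = Q.
Proof.
  intro H0. unfold mirror. rewrite reflect_fix.
  - unfold_pts. f_equal; ring.
  - apply side_dir_nz.
  - rewrite side_bary_cross, H0. ring.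
Qed.

Lemma mirror_shift v O a D :
  mirror v (padd O (pscale a D)) = padd (mirror v O) (pscale a (reflect (side_dir v) D)).
Proof. unfold mirror. generalize (side_dir v) (vert (vnext v)). intros w V. unfold_pts. f_equal; unfold Rdiv; ring. Qed.

Lemma bounce_iff Q d d' : bounce A B C Q d d' <-> exists v, side_seg v Q /\ d' = reflect (side_dir v) d.
Proof.
  unfold bounce, side_seg, side_dir. split.
  - intros [H|[H|H]]; [exists VC|exists VA|exists VB]; exact H.
  - intros [[] H]; simpl in H; auto.
Qed.

Lemma AB_sq_pos : 0 < dot (psub B A) (psub B A).
Proof.
  generalize Hnd; unfold nondeg, dot, cross, psub; destruct A as [a1 a2], B as [b1 b2], C as [c1 c2]; simpl.
  intro H. destruct (Req_dec (b1 - a1) 0) as [E1|E1]; [destruct (Req_dec (b2 - a2) 0) as [E2|E2]|].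
  - exfalso; apply H; rewrite E1, E2; ring.
  - pose proof (Rsqr_pos_lt _ E2); pose proof (Rle_0_sqr (b1 - a1)); unfold Rsqr in *; lra.
  - pose proof (Rsqr_pos_lt _ E1); pose proof (Rle_0_sqr (b2 - a2)); unfold Rsqr in *; lra.
Qed.

Lemma e1_unit : dot (e1 A B) (e1 A B) = 1.
Proof.
  pose proof AB_sq_pos as Hp. unfold e1, pnorm. revert Hp. generalize (psub B A). intros [p q] Hp.
  unfold dot, pscale in *; simpl in *.
  pose proof (sqrt_sqrt (p * p + q * q)) as S. pose proof (sqrt_lt_R0 _ Hp) as S2.
  set (s := sqrt (p * p + q * q)) in *.
  transitivity ((p * p + q * q) / (s * s)); [field; lra | rewrite S; [field|]; lra].
Qed.

Lemma orient_sq : orient A B C * orient A B C = 1.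
Proof. unfold orient; destruct Rlt_dec; ring. Qed.

Lemma orient_area_pos : 0 < orient A B C * cross (psub B A) (psub C A).
Proof.
  generalize Hnd; unfold orient, nondeg. destruct Rlt_dec; [lra|].
  intro. assert (cross (psub B A) (psub C A) < 0) by (apply Rnot_le_lt; intro; apply Hnd; lra). lra.
Qed.

Lemma dir_coords th :
  dot (dir A B C th) (e1 A B) = cos th /\ dot (dir A B C th) (rot90 (e1 A B)) = sin th * orient A B C.
Proof.
  pose proof e1_unit as U. unfold dir in *. revert U. generalize (e1 A B) (orient A B C). intros [p q] o U.
  unfold dot, padd, pscale, rot90 in *; simpl in *. split.
  - transitivity (cos th * (p * p + q * q)); [ring | rewrite U; ring].
  - transitivity (sin th * o * (p * p + q * q)); [ring | rewrite U; ring].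
Qed.

Lemma in_I_lt_PI th : in_I A B C th -> 0 <= th < PI.
Proof.
  intros [[H0 H1] H2]. split; auto. destruct (Req_dec th PI) as [->|E]; [exfalso|lra].
  unfold dir in H2. rewrite cos_PI, sin_PI in H2.
  assert (X : orient A B C * cross (padd (pscale (-1) (e1 A B)) (pscale (0 * orient A B C) (rot90 (e1 A B)))) (psub C A)
     = - (orient A B C * cross (psub B A) (psub C A)) / pnorm (psub B A)).
  { unfold e1. generalize (pnorm (psub B A)) (orient A B C). intros. unfold rot90; unfold_pts. unfold Rdiv; ring. }
  rewrite X in H2. pose proof orient_area_pos.
  assert (0 < pnorm (psub B A)) by (apply sqrt_lt_R0, AB_sq_pos).
  assert (0 < orient A B C * cross (psub B A) (psub C A) / pnorm (psub B A)) by (apply Rdiv_lt_0_compat; auto).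
  unfold Rdiv in *. lra.
Qed.

Lemma dir_not_pos_multiple x y a b : in_I A B C x -> in_I A B C y -> x < y -> 0 < a -> 0 < b ->
  pscale a (dir A B C x) <> pscale b (dir A B C y).
Proof.
  intros Hx Hy Hxy Ha Hb E.
  destruct (dir_coords x) as [Cx Sx]. destruct (dir_coords y) as [Cy Sy].
  assert (Hdot : forall W, a * dot (dir A B C x) W = b * dot (dir A B C y) W).
  { intro W. revert E. generalize (dir A B C x) (dir A B C y). intros P Q E.
    transitivity (dot (pscale a P) W); [unfold_pts; ring | rewrite E; unfold_pts; ring]. }
  assert (E1 : a * cos x = b * cos y) by (rewrite <- Cx, <- Cy; apply Hdot).
  assert (E3 : a * sin x = b * sin y).
  { pose proof (Hdot (rot90 (e1 A B))) as E2. rewrite Sx, Sy in E2.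
    pose proof orient_sq as O. set (o := orient A B C) in *.
    assert (a * sin x = a * (sin x * o) * o) as -> by (transitivity (a * sin x * (o * o)); [rewrite O|]; ring).
    assert (b * sin y = b * (sin y * o) * o) as -> by (transitivity (b * sin y * (o * o)); [rewrite O|]; ring).
    rewrite E2; reflexivity. }
  assert (Eab : a * a = b * b).
  { pose proof (sin2_cos2 x) as S1; pose proof (sin2_cos2 y) as S2; unfold Rsqr in *.
    transitivity (a * a * (sin x * sin x + cos x * cos x)); [rewrite S1; ring|].
    transitivity ((a * sin x) * (a * sin x) + (a * cos x) * (a * cos x)); [ring|].
    rewrite E1, E3. transitivity (b * b * (sin y * sin y + cos y * cos y)); [ring | rewrite S2; ring]. }
  assert (a = b) as <-.
  { assert (Eq : (a - b) * (a + b) = 0) by (ring_simplify; lra). apply Rmult_integral in Eq. lra. }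
  apply in_I_lt_PI in Hx; apply in_I_lt_PI in Hy.
  pose proof (cos_decreasing_1 x y ltac:(lra) ltac:(lra) ltac:(lra) ltac:(lra) Hxy). nra.
Qed.

Lemma dir_between x y al be : in_I A B C x -> in_I A B C y -> x < y -> 0 < al -> 0 < be ->
  exists z N, x < z < y /\ in_I A B C z /\ 0 < N /\
    dir A B C z = pscale (/ N) (padd (pscale al (dir A B C x)) (pscale be (dir A B C y))).
Proof.
  intros Hx Hy Hxy Ha Hb.
  pose proof (in_I_lt_PI x Hx) as Bx. pose proof (in_I_lt_PI y Hy) as By.
  set (c1 := al * cos x + be * cos y). set (s1 := al * sin x + be * sin y).
  assert (Hsx : 0 <= sin x) by (apply sin_ge_0; lra).
  assert (Hsy : 0 < sin y) by (apply sin_gt_0; lra).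
  assert (Hs1 : 0 < s1) by (unfold s1; nra).
  destruct (polar_upper c1 s1 Hs1) as (z & N & HN & Bz & Cz & Sz).
  assert (Sxy : 0 < sin (y - x)) by (apply sin_gt_0; lra).
  assert (Edir : dir A B C z = pscale (/ N) (padd (pscale al (dir A B C x)) (pscale be (dir A B C y)))).
  { unfold dir. rewrite Cz, Sz. unfold c1, s1. generalize (e1 A B) (orient A B C).
    intros u o. unfold rot90; unfold_pts; f_equal; field; lra. }
  exists z, N. split; [split|split; [|split; [lra|exact Edir]]].
  - apply Rlt_0_minus, sin_pos_arg; [lra|].
    rewrite sin_minus, Cz, Sz.
    replace (s1 / N * cos x - c1 / N * sin x) with (be * sin (y - x) / N)
      by (rewrite sin_minus; unfold s1, c1; field; lra).
    apply Rdiv_lt_0_compat; nra.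
  - apply Rlt_0_minus, sin_pos_arg; [lra|].
    rewrite sin_minus, Cz, Sz.
    replace (sin y * (c1 / N) - cos y * (s1 / N)) with (al * sin (y - x) / N)
      by (rewrite sin_minus; unfold s1, c1; field; lra).
    apply Rdiv_lt_0_compat; nra.
  - split; [lra|]. rewrite Edir. destruct Hx as [_ Hx]. destruct Hy as [_ Hy].
    revert Hx Hy. generalize (dir A B C x) (dir A B C y) (orient A B C). intros P Q o Hx Hy.
    replace (o * cross (pscale (/ N) (padd (pscale al P) (pscale be Q))) (psub C A))
      with (/ N * (al * (o * cross P (psub C A)) + be * (o * cross Q (psub C A)))) by (unfold_pts; ring).
    apply Rmult_le_pos; [apply Rlt_le, Rinv_0_lt_compat; auto | nra].
Qed.

(** * Billiard paths and their unfolding *)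

Definition traj (th : R) (r : nat) (P D : nat -> pt) : Prop :=
  P 0%nat = A /\ D 0%nat = dir A B C th /\
  (forall k, (k <= r)%nat -> exit_pt A B C (P k) (D k) (P (S k))) /\
  (forall k, (1 <= k <= r)%nat -> ~ is_vertex A B C (P k) /\ bounce A B C (P k) (D (pred k)) (D k)) /\
  is_vertex A B C (P (S r)).

Definition hit_side (P D : nat -> pt) (k : nat) : vtx :=
  epsilon (inhabits VA) (fun v => side_seg v (P k) /\ D k = reflect (side_dir v) (D (pred k))).

Definition step_len (P D : nat -> pt) (k : nat) : R :=
  epsilon (inhabits 0) (fun t => 0 < t /\ P (S k) = padd (P k) (pscale t (D k))).

Fixpoint cumul (t : nat -> R) (k : nat) : R :=
  match k with 0%nat => 0 | S j => cumul t j + t j end.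

(** Image of [A] in the unfolding of the triangle along the sides [s 1, s 2, ...]. *)
Fixpoint unfolded_origin (s : nat -> vtx) (k : nat) : pt :=
  match k with 0%nat => A | S j => mirror (s (S j)) (unfolded_origin s j) end.

Section Trajectory.

Variables (th : R) (r : nat) (P D : nat -> pt).
Hypothesis HT : traj th r P D.

Let side := hit_side P D.
Let len := step_len P D.

Lemma traj_in k : (k <= S r)%nat -> in_tri A B C (P k).
Proof.
  destruct HT as (H0 & _ & He & _). intro Hk. destruct k.
  - rewrite H0. apply (vert_in_tri VA).
  - destruct (He k ltac:(lia)) as (t & _ & _ & Hi & _); auto.
Qed.

Lemma traj_hit k : (1 <= k <= r)%nat ->
  on_open_side (side k) (P k) /\ D k = reflect (side_dir (side k)) (D (pred k)).
Proof.
  intro Hk. destruct HT as (_ & _ & _ & Hb & _).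
  destruct (Hb k Hk) as [Hnv Hbo]. apply bounce_iff in Hbo.
  destruct (epsilon_spec (inhabits VA) _ Hbo) as [Hs Hr]. fold (hit_side P D k) side in Hs, Hr.
  apply side_seg_bary in Hs as [Hi H0]. split; auto. apply open_side_of_nonvertex; auto.
Qed.

Lemma traj_step k : (k <= r)%nat -> 0 < len k /\ P (S k) = padd (P k) (pscale (len k) (D k)).
Proof.
  intro Hk. destruct HT as (_ & _ & He & _). destruct (He k Hk) as (t & Ht & E & _).
  apply (epsilon_spec (inhabits 0) (fun t => 0 < t /\ P (S k) = padd (P k) (pscale t (D k)))). eauto.
Qed.

Lemma traj_dbary_neg k : (S k <= r)%nat -> dbary (side (S k)) (D k) < 0.
Proof.
  intro Hk. destruct HT as (_ & _ & He & _).
  apply (exit_dbary_neg (P k) _ (P (S k))); [apply He; lia | apply traj_hit; lia].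
Qed.

Lemma traj_first_side : (1 <= r)%nat -> side 1%nat = VA.
Proof.
  intro Hr. destruct (traj_hit 1 ltac:(lia)) as [[H0 _] _].
  destruct HT as (E0 & _ & He & Hb & _). destruct (Hb 1%nat ltac:(lia)) as [Hnv _].
  assert (HA : P 0%nat = vert VA) by exact E0.
  destruct (side 1%nat) eqn:Es; auto; exfalso; apply Hnv;
    (apply (exit_along_side (P 0) (D 0) _ (side 1%nat)); [| |apply He; lia|rewrite Es; exact H0]);
    rewrite HA, ?Es, ?bary_vert; auto using vert_in_tri.
Qed.

Lemma traj_hit_consec k : (1 <= k)%nat -> (S k <= r)%nat -> side k <> side (S k).
Proof.
  intros Hk1 Hk2 E.
  destruct (traj_hit k ltac:(lia)) as [[H0 _] _]. destruct (traj_hit (S k) ltac:(lia)) as [[H1 Hpos] _].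
  destruct HT as (_ & _ & He & _).
  apply (open_side_nonvertex (side (S k)) (P (S k))); [split; auto|].
  apply (exit_along_side (P k) (D k) _ (side k)); [apply traj_in; lia | auto | apply He; lia | rewrite E; auto].
Qed.

(** Otherwise the last chord would run along the last side hit, and by reflection so would the previous one. *)
Lemma traj_end : (1 <= r)%nat -> P (S r) = vert (side r).
Proof.
  intro Hr. pose proof HT as (_ & _ & He & Hb & Hv).
  apply is_vertex_vert in Hv as [u Hu]. rewrite Hu. f_equal.
  apply NNPP; intro Hne.
  destruct (traj_hit r ltac:(lia)) as [[H0 _] HR]. set (v := side r) in *.
  destruct (traj_step r ltac:(lia)) as [Ht Et].
  assert (L1 : bary v (P (S r)) = 0) by (rewrite Hu, bary_vert; destruct vtx_eq_dec; congruence).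
  rewrite Et, bary_shift, H0 in L1.
  assert (Hd : dbary v (D r) = 0) by nra.
  rewrite HR, dbary_reflect in Hd.
  assert (Er : S (pred r) = r) by lia.
  destruct (traj_step (pred r) ltac:(lia)) as [Ht' Et']. rewrite Er in Et'.
  assert (L2 : bary v (P (pred r)) = 0) by (rewrite Et', bary_shift in H0; nra).
  destruct (Hb r ltac:(lia)) as [Hnv _]. apply Hnv.
  apply (exit_along_side (P (pred r)) (D (pred r)) _ v); [apply traj_in; lia | auto | | auto].
  pose proof (He (pred r) ltac:(lia)) as Hx. rewrite Er in Hx. exact Hx.
Qed.

Lemma traj_cumul_lt j : (j <= r)%nat -> cumul len j < cumul len (S j).
Proof. intro Hj. simpl. pose proof (proj1 (traj_step j Hj)). lra. Qed.

Lemma traj_cumul_pos j : (1 <= j <= S r)%nat -> 0 < cumul len j.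
Proof.
  intros [Hj1 Hj2]. induction j as [|j IH]; [lia|].
  pose proof (traj_cumul_lt j ltac:(lia)). destruct j; [simpl in *; lra|].
  pose proof (IH ltac:(lia) ltac:(lia)). lra.
Qed.

Lemma traj_unfold s j : (j <= r)%nat -> agree side s j ->
  P j = padd (unfolded_origin s j) (pscale (cumul len j) (D j)) /\
  P (S j) = padd (unfolded_origin s j) (pscale (cumul len (S j)) (D j)).
Proof.
  induction j as [|j IH]; intros Hj Ha.
  - destruct HT as (E0 & _). destruct (traj_step 0 Hj) as [_ E1]. simpl.
    rewrite E1, E0. split; unfold_pts; f_equal; ring.
  - destruct IH as [_ IH]; [lia | intros i Hi; apply Ha; lia |].
    destruct (traj_hit (S j) ltac:(lia)) as [[H0 _] HR]. rewrite (Ha (S j) ltac:(lia)) in H0, HR. simpl pred in HR.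
    assert (E : P (S j) = padd (unfolded_origin s (S j)) (pscale (cumul len (S j)) (D (S j)))).
    { simpl unfolded_origin. rewrite HR, <- mirror_shift, <- IH. symmetry. apply mirror_fix, H0. }
    split; [exact E|]. destruct (traj_step (S j) Hj) as [_ E1]. rewrite E1, E, padd_shift. reflexivity.
Qed.

End Trajectory.

(** Two billiard paths through the same sides to a vertex are the same ray in the
    unfolding, so they would start in positively proportional directions. *)
Lemma distinct_dirs_sides_differ x y r Px Dx Py Dy : in_I A B C x -> in_I A B C y -> x < y ->
  (1 <= r)%nat -> traj x r Px Dx -> traj y r Py Dy -> ~ agree (hit_side Px Dx) (hit_side Py Dy) r.
Proof.
  intros Hx Hy Hxy Hr Tx Ty Ha.
  set (sx := hit_side Px Dx) in *. set (sy := hit_side Py Dy) in *.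
  destruct (traj_unfold x r Px Dx Tx sx r ltac:(lia) (fun i _ => eq_refl)) as [_ Ux].
  destruct (traj_unfold y r Py Dy Ty sx r ltac:(lia) (agree_sym _ _ _ Ha)) as [_ Uy].
  rewrite (traj_end x r Px Dx Tx Hr) in Ux. rewrite (traj_end y r Py Dy Ty Hr) in Uy.
  fold sx in Ux. fold sy in Uy. rewrite <- (Ha r ltac:(lia)), Ux in Uy. apply padd_cancel in Uy.
  set (a := cumul (step_len Px Dx) (S r)) in *. set (b := cumul (step_len Py Dy) (S r)) in *.
  assert (Back : forall j, (j <= r)%nat -> pscale a (Dx j) = pscale b (Dy j) ->
                          pscale a (Dx 0%nat) = pscale b (Dy 0%nat)).
  { induction j as [|j IH]; intros Hj E; auto. apply IH; [lia|].
    destruct (traj_hit x r Px Dx Tx (S j) ltac:(lia)) as [_ Rx].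
    destruct (traj_hit y r Py Dy Ty (S j) ltac:(lia)) as [_ Ry].
    fold sx in Rx. fold sy in Ry. rewrite <- (Ha (S j) ltac:(lia)) in Ry. simpl pred in Rx, Ry.
    rewrite Rx, Ry, !reflect_scale in E.
    rewrite <- (reflect_invol (side_dir (sx (S j))) (pscale a (Dx j))), E.
    apply reflect_invol, side_dir_nz. apply side_dir_nz. }
  pose proof (Back r ltac:(lia) Uy) as E0.
  pose proof Tx as (_ & Dx0 & _). pose proof Ty as (_ & Dy0 & _). rewrite Dx0, Dy0 in E0.
  apply (dir_not_pos_multiple x y a b); auto.
  - apply (traj_cumul_pos x r Px Dx Tx); lia.
  - apply (traj_cumul_pos y r Py Dy Ty); lia.
Qed.

Lemma vertex_in_cone v s s' O Dx Dy a' a b' b :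
  v <> s -> v <> s' -> s <> s' -> 0 < a' < a -> 0 < b' < b ->
  on_open_side v (padd O (pscale a' Dx)) -> on_open_side s (padd O (pscale a Dx)) ->
  on_open_side v (padd O (pscale b' Dy)) -> on_open_side s' (padd O (pscale b Dy)) ->
  exists p q, 0 < p /\ 0 < q /\ vert v = padd O (padd (pscale p Dx) (pscale q Dy)) /\
    a' * b' < p * b' + q * a' /\ 0 < dbary v (padd (pscale p Dx) (pscale q Dy)).
Proof.
  intros n1 n2 n3 Ha Hb [X'v X'] [Xs X] [Y'v Y'] [Ys' Y].
  pose proof (X' s (not_eq_sym n1)) as X's. pose proof (X v n1) as Xv. pose proof (X s' (not_eq_sym n3)) as Xs'.
  pose proof (Y' s' (not_eq_sym n2)) as Y's'. pose proof (Y v n2) as Yv. pose proof (Y s n3) as Ys.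
  clear X X' Y Y'. rewrite !bary_shift in *.
  set (Lv := bary v O) in *. set (Ls := bary s O) in *. set (Ls' := bary s' O) in *.
  set (dv := dbary v Dx) in *. set (ds := dbary s Dx) in *. set (ds' := dbary s' Dx) in *.
  set (ev := dbary v Dy) in *. set (es := dbary s Dy) in *. set (es' := dbary s' Dy) in *.
  pose proof (bary_sum3 v s s' O n1 n2 n3) as SL.
  pose proof (dbary_sum3 v s s' Dx n1 n2 n3) as Sd. pose proof (dbary_sum3 v s s' Dy n1 n2 n3) as Se.
  fold Lv Ls Ls' in SL. fold dv ds ds' in Sd. fold ev es es' in Se.
  assert (Hdv : 0 < dv) by nra. assert (Hev : 0 < ev) by nra.
  assert (Hds : ds < 0) by nra. assert (Hes' : es' < 0) by nra.
  destruct (pos_solution_2x2 Ls Ls' (b * ev - Ls') (a * dv - Ls)) as (al & be & Hal & Hbe & E1 & E2);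
    [nra | nra | nra | nra |].
  assert (Ads : a * ds = - Ls) by lra. assert (Bes' : b * es' = - Ls') by lra.
  assert (Ads' : a * ds' = - a * dv + Ls) by (replace ds' with (- dv - ds) by lra; nra).
  assert (Bes : b * es = - b * ev + Ls') by (replace es with (- ev - es') by lra; nra).
  set (V := padd O (padd (pscale (al * a) Dx) (pscale (be * b) Dy))).
  assert (Ev : vert v = V).
  { apply (vert_of_zero_bary v s s'); auto; unfold V; rewrite bary_comb.
    - fold Ls ds es. replace (al * a * ds) with (al * (a * ds)) by ring.
      replace (be * b * es) with (be * (b * es)) by ring. rewrite Ads, Bes. nra.
    - fold Ls' ds' es'. replace (al * a * ds') with (al * (a * ds')) by ring.
      replace (be * b * es') with (be * (b * es')) by ring. rewrite Ads', Bes'. nra. }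
  assert (Bv : Lv + al * a * dv + be * b * ev = 1).
  { pose proof (bary_vert v v) as E. rewrite Ev in E. unfold V in E. rewrite bary_comb in E.
    destruct vtx_eq_dec; [exact E | congruence]. }
  assert (Hpos : 0 < a' * dv) by nra.
  exists (al * a), (be * b). split; [nra|]. split; [nra|]. split; [exact Ev|]. split.
  - assert (E : (al * a * b' + be * b * a') * (a' * dv) = a' * b' * (al * a * dv + be * b * ev)).
    { assert (Eq : a' * dv = b' * ev) by lra.
      transitivity (al * a * b' * (a' * dv) + be * b * a' * (b' * ev)); [rewrite <- Eq|]; ring. }
    replace (al * a * dv + be * b * ev) with (1 + a' * dv) in E by lra.
    assert (0 < a' * b') by nra. set (K := al * a * b' + be * b * a') in *. nra.
  - rewrite dbary_lin. fold dv ev. lra.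
Qed.

(* Two paths of the same index meeting the same sides up to step [m].  The ray along
   [al Dx + be Dy], unfolded along these sides, crosses each chord [[Px j, Py j]], so it
   meets the same open sides. *)
Section Interpolation.

Variables (x y : R) (r m : nat) (Px Dx Py Dy : nat -> pt) (al be : R).
Hypotheses (Tx : traj x r Px Dx) (Ty : traj y r Py Dy) (Hm : (m <= r)%nat)
  (Hagree : agree (hit_side Px Dx) (hit_side Py Dy) m) (Hal : 0 < al) (Hbe : 0 < be).

Let sx := hit_side Px Dx.
Let O := unfolded_origin sx.
Let ax := cumul (step_len Px Dx).
Let ay := cumul (step_len Py Dy).

Definition interp_dir (j : nat) : pt := padd (pscale al (Dx j)) (pscale be (Dy j)).
Definition interp_param (j : nat) : R := ax j * ay j / (al * ay j + be * ax j).
Definition interp_pt (j : nat) : pt := padd (O j) (pscale (interp_param j) (interp_dir j)).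

Lemma interp_unfold j : (j <= m)%nat ->
  (Px j = padd (O j) (pscale (ax j) (Dx j)) /\ Px (S j) = padd (O j) (pscale (ax (S j)) (Dx j))) /\
  (Py j = padd (O j) (pscale (ay j) (Dy j)) /\ Py (S j) = padd (O j) (pscale (ay (S j)) (Dy j))).
Proof.
  intro Hj. split.
  - apply (traj_unfold x r Px Dx Tx sx j ltac:(lia)). intros i Hi. reflexivity.
  - apply (traj_unfold y r Py Dy Ty sx j ltac:(lia)). intros i Hi. symmetry. apply Hagree; lia.
Qed.

Lemma interp_cumul_pos j : (1 <= j <= S m)%nat -> 0 < ax j /\ 0 < ay j.
Proof. intro Hj. split; [apply (traj_cumul_pos x r Px Dx Tx) | apply (traj_cumul_pos y r Py Dy Ty)]; lia. Qed.

Lemma interp_pt_convex j : (1 <= j <= m)%nat ->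
  exists mu, 0 < mu < 1 /\ interp_pt j = padd (pscale mu (Px j)) (pscale (1 - mu) (Py j)).
Proof.
  intro Hj. destruct (interp_unfold j ltac:(lia)) as [[Ex _] [Ey _]].
  destruct (interp_cumul_pos j ltac:(lia)) as [Hx Hy].
  exists (al * ay j / (al * ay j + be * ax j)). split; [apply ratio_in_01; auto|].
  unfold interp_pt, interp_param, interp_dir. rewrite Ex, Ey. apply segment_meets_ray; auto.
Qed.

Lemma interp_next_convex j : (j <= m)%nat ->
  exists mu, 0 < mu < 1 /\ padd (O j) (pscale (interp_param (S j)) (interp_dir j)) =
                            padd (pscale mu (Px (S j))) (pscale (1 - mu) (Py (S j))).
Proof.
  intro Hj. destruct (interp_unfold j Hj) as [[_ Ex'] [_ Ey']].
  destruct (interp_cumul_pos (S j) ltac:(lia)) as [Hx' Hy'].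
  exists (al * ay (S j) / (al * ay (S j) + be * ax (S j))). split; [apply ratio_in_01; auto|].
  unfold interp_param, interp_dir. rewrite Ex', Ey'. apply segment_meets_ray; auto.
Qed.

Lemma interp_hit j : (1 <= j <= m)%nat ->
  on_open_side (sx j) (Px j) /\ on_open_side (sx j) (Py j) /\
  interp_dir j = reflect (side_dir (sx j)) (interp_dir (pred j)).
Proof.
  intro Hj. destruct (traj_hit x r Px Dx Tx j ltac:(lia)) as [Sx Rx].
  destruct (traj_hit y r Py Dy Ty j ltac:(lia)) as [Sy Ry].
  rewrite <- (Hagree j Hj) in Sy, Ry. fold sx in Sx, Sy, Rx, Ry.
  split; [exact Sx | split; [exact Sy|]]. unfold interp_dir. rewrite reflect_lin, <- Rx, <- Ry. reflexivity.
Qed.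

Lemma interp_on_side j : (1 <= j <= m)%nat -> on_open_side (sx j) (interp_pt j).
Proof.
  intro Hj. destruct (interp_pt_convex j Hj) as (mu & Hmu & ->).
  destruct (interp_hit j Hj) as (Sx & Sy & _). apply open_side_convex; auto.
Qed.

Lemma interp_param_lt j : (j <= m)%nat -> interp_param j < interp_param (S j).
Proof.
  intro Hj. destruct (interp_cumul_pos (S j) ltac:(lia)) as [Hx' Hy'].
  destruct j as [|j].
  - replace (interp_param 0) with 0 by (unfold interp_param, ax, ay; simpl; unfold Rdiv; ring).
    apply Rdiv_lt_0_compat; nra.
  - destruct (interp_cumul_pos (S j) ltac:(lia)) as [Hx Hy].
    apply ray_param_lt; auto; [apply (traj_cumul_lt x r Px Dx Tx) | apply (traj_cumul_lt y r Py Dy Ty)]; lia.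
Qed.

Lemma interp_step j : (S j <= m)%nat ->
  interp_pt (S j) = padd (interp_pt j) (pscale (interp_param (S j) - interp_param j) (interp_dir j)).
Proof.
  intro Hj. set (Q := padd (O j) (pscale (interp_param (S j)) (interp_dir j))).
  assert (HQ : bary (sx (S j)) Q = 0).
  { destruct (interp_next_convex j ltac:(lia)) as (mu & Hmu & E). fold Q in E. rewrite E.
    destruct (interp_hit (S j) ltac:(lia)) as ([Sx _] & [Sy _] & _).
    rewrite bary_convex, Sx, Sy. ring. }
  transitivity Q.
  - destruct (interp_hit (S j) ltac:(lia)) as (_ & _ & R). unfold interp_pt. rewrite R.
    rewrite <- (mirror_fix _ Q HQ). unfold Q. rewrite mirror_shift. reflexivity.
  - unfold Q, interp_pt. rewrite padd_shift. f_equal. f_equal. ring.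
Qed.

Lemma interp_dbary_neg j : (S j <= m)%nat -> dbary (sx (S j)) (interp_dir j) < 0.
Proof.
  intro Hj. pose proof (traj_dbary_neg x r Px Dx Tx j ltac:(lia)) as D1.
  pose proof (traj_dbary_neg y r Py Dy Ty j ltac:(lia)) as D2.
  rewrite <- (Hagree (S j) ltac:(lia)) in D2. fold sx in D1, D2.
  unfold interp_dir. rewrite dbary_lin. nra.
Qed.

Lemma interp_exit j : (S j <= m)%nat -> exit_pt A B C (interp_pt j) (interp_dir j) (interp_pt (S j)).
Proof.
  intro Hj. pose proof (interp_param_lt j ltac:(lia)). pose proof (interp_on_side (S j) ltac:(lia)) as HS.
  rewrite interp_step in * by exact Hj.
  apply (exit_pt_through_side _ _ _ (sx (S j))); [lra | eapply open_side_in_tri, HS | apply HS |].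
  apply interp_dbary_neg, Hj.
Qed.

Lemma interp_exit_vertex v N : (1 <= m)%nat -> vert v = padd (O m) (pscale N (interp_dir m)) ->
  ax m * ay m < N * (al * ay m + be * ax m) -> 0 < dbary v (interp_dir m) ->
  exit_pt A B C (interp_pt m) (interp_dir m) (vert v).
Proof.
  intros Hm1 Ev Hlt Hd. destruct (interp_cumul_pos m ltac:(lia)) as [Hx Hy].
  assert (Hc : interp_param m < N).
  { unfold interp_param. apply (Rmult_lt_reg_r (al * ay m + be * ax m)); [nra|].
    unfold Rdiv. rewrite Rmult_assoc, Rinv_l by nra. lra. }
  apply (exit_pt_at_vertex _ _ (N - interp_param m)); [lra | | exact Hd].
  rewrite Ev. unfold interp_pt. rewrite padd_shift. f_equal. f_equal. ring.
Qed.

Lemma interp_traj z v N : (1 <= m)%nat -> dir A B C z = interp_dir 0 ->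
  vert v = padd (O m) (pscale N (interp_dir m)) ->
  ax m * ay m < N * (al * ay m + be * ax m) -> 0 < dbary v (interp_dir m) ->
  traj z m (fun j => if Nat.leb j m then interp_pt j else vert v) interp_dir.
Proof.
  intros Hm1 Hz Ev Hlt Hd.
  assert (Hle : forall j, (j <= m)%nat -> Nat.leb j m = true) by (intros; apply Nat.leb_le; auto).
  split; [|split; [|split; [|split]]].
  - simpl. unfold interp_pt, O; simpl unfolded_origin.
    replace (interp_param 0) with 0 by (unfold interp_param, ax, ay; simpl; unfold Rdiv; ring).
    generalize (interp_dir 0). intro. unfold_pts. f_equal; ring.
  - auto.
  - intros k Hk. rewrite (Hle k Hk). destruct (Nat.eq_dec k m) as [->|Hne].
    + rewrite (proj2 (Nat.leb_gt (S m) m) (Nat.lt_succ_diag_r m)). apply (interp_exit_vertex v N); auto.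
    + rewrite (Hle (S k) ltac:(lia)). apply interp_exit; lia.
  - intros k Hk. rewrite (Hle k ltac:(lia)). split.
    + apply (open_side_nonvertex (sx k)), interp_on_side, Hk.
    + apply bounce_iff. exists (sx k). split.
      * pose proof (interp_on_side k Hk) as HS.
        apply side_seg_bary. split; [eapply open_side_in_tri, HS | apply HS].
      * apply interp_hit, Hk.
  - rewrite (proj2 (Nat.leb_gt (S m) m) (Nat.lt_succ_diag_r m)). apply is_vertex_vert. eauto.
Qed.

End Interpolation.

(** The vertex shared by the two sides where the paths diverge is reached, after [m]
    reflections, by a positive combination of the two directions. *)
Lemma diverging_sides_vertex x y r Px Dx Py Dy m : in_I A B C x -> in_I A B C y -> x < y ->
  traj x r Px Dx -> traj y r Py Dy -> (1 <= m)%nat -> (m < r)%nat ->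
  agree (hit_side Px Dx) (hit_side Py Dy) m -> hit_side Px Dx (S m) <> hit_side Py Dy (S m) ->
  exists z, x < z < y /\ has_index A B C z m.
Proof.
  intros Hx Hy Hxy Tx Ty Hm1 Hm Ha Hd.
  set (sx := hit_side Px Dx) in *. set (sy := hit_side Py Dy) in *.
  set (v := sx m). assert (Hv : sy m = v) by (symmetry; apply Ha; lia).
  assert (n1 : v <> sx (S m)) by (apply (traj_hit_consec x r Px Dx Tx); lia).
  assert (n2 : v <> sy (S m)) by (rewrite <- Hv; apply (traj_hit_consec y r Py Dy Ty); lia).
  destruct (traj_unfold x r Px Dx Tx sx m ltac:(lia) (fun i _ => eq_refl)) as [Ux Ux'].
  destruct (traj_unfold y r Py Dy Ty sx m ltac:(lia) (agree_sym _ _ _ Ha)) as [Uy Uy'].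
  set (ax := cumul (step_len Px Dx)) in *. set (ay := cumul (step_len Py Dy)) in *.
  destruct (vertex_in_cone v (sx (S m)) (sy (S m)) (unfolded_origin sx m) (Dx m) (Dy m)
              (ax m) (ax (S m)) (ay m) (ay (S m))) as (p & q & Hp & Hq & Ev & Hlt & Hdv); auto.
  { split; [apply (traj_cumul_pos x r Px Dx Tx) | apply (traj_cumul_lt x r Px Dx Tx)]; lia. }
  { split; [apply (traj_cumul_pos y r Py Dy Ty) | apply (traj_cumul_lt y r Py Dy Ty)]; lia. }
  { rewrite <- Ux. apply (traj_hit x r Px Dx Tx m); lia. }
  { rewrite <- Ux'. apply (traj_hit x r Px Dx Tx (S m)); lia. }
  { rewrite <- Uy, <- Hv. apply (traj_hit y r Py Dy Ty m); lia. }
  { rewrite <- Uy'. apply (traj_hit y r Py Dy Ty (S m)); lia. }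
  destruct (dir_between x y p q Hx Hy Hxy Hp Hq) as (z & N & Hz & HIz & HN & Edz).
  assert (Comb : forall P Q, padd (pscale p P) (pscale q Q) = pscale N (padd (pscale (p / N) P) (pscale (q / N) Q))).
  { intros P Q. unfold_pts. f_equal; field; lra. }
  exists z. split; [exact Hz|]. split; [exact HIz|]. do 2 eexists.
  apply (interp_traj x y r m Px Dx Py Dy (p / N) (q / N) Tx Ty ltac:(lia) Ha
           ltac:(apply Rdiv_lt_0_compat; auto) ltac:(apply Rdiv_lt_0_compat; auto) z v N Hm1).
  - pose proof Tx as (_ & Dx0 & _). pose proof Ty as (_ & Dy0 & _).
    rewrite Edz, <- Dx0, <- Dy0, Comb. unfold interp_dir. unfold_pts. f_equal; field; lra.
  - rewrite Ev, Comb. reflexivity.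
  - fold ax ay. replace (N * (p / N * ay m + q / N * ax m)) with (p * ay m + q * ax m) by (field; lra). lra.
  - unfold interp_dir. rewrite dbary_lin in *.
    replace (p / N * dbary v (Dx m) + q / N * dbary v (Dy m))
      with ((p * dbary v (Dx m) + q * dbary v (Dy m)) / N) by (field; lra).
    apply Rdiv_lt_0_compat; auto.
Qed.

Lemma between_equal_index x y r : has_index A B C x r -> has_index A B C y r -> x < y -> (1 <= r)%nat ->
  exists z p, x < z < y /\ (p < r)%nat /\ has_index A B C z p.
Proof.
  intros [Hx (Px & Dx & Tx)] [Hy (Py & Dy & Ty)] Hxy Hr.
  destruct (first_disagreement (hit_side Px Dx) (hit_side Py Dy) r) as [Ha | (m & Hm & Ha & Hd)].
  - exfalso. exact (distinct_dirs_sides_differ x y r Px Dx Py Dy Hx Hy Hxy Hr Tx Ty Ha).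
  - assert (Hm1 : (1 <= m)%nat).
    { destruct m; [|lia]. exfalso. apply Hd.
      rewrite (traj_first_side x r Px Dx Tx Hr), (traj_first_side y r Py Dy Ty Hr). reflexivity. }
    destruct (diverging_sides_vertex x y r Px Dx Py Dy m Hx Hy Hxy Tx Ty Hm1 Hm Ha Hd) as (z & Hz & Hi).
    exists z, m. auto.
Qed.

End Triangle.

(** * Counting cutting points *)

Definition count_below (L : list R) (y : R) : nat :=
  length (filter (fun z => if Rlt_dec z y then true else false) L).

Lemma count_below_le L y : (count_below L y <= length L)%nat.
Proof. apply filter_length_le. Qed.

Lemma count_below_lt L x y z : In z L -> x < z < y -> (count_below L x < count_below L y)%nat.
Proof.
  unfold count_below. induction L as [|w L IH]; [contradiction|]. intros [->|Hz] Hxy; simpl.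
  - destruct (Rlt_dec z x); [lra|]. destruct (Rlt_dec z y); [|lra]. simpl.
    assert (Hle : forall L', (length (filter (fun z => if Rlt_dec z x then true else false) L') <=
                              length (filter (fun z => if Rlt_dec z y then true else false) L'))%nat).
    { induction L' as [|u L' IH']; simpl; [lia|].
      destruct (Rlt_dec u x), (Rlt_dec u y); simpl; lia || lra. }
    specialize (Hle L). lia.
  - specialize (IH Hz Hxy). destruct (Rlt_dec w x), (Rlt_dec w y); simpl; lia || lra.
Qed.

Lemma list_max_below (L : list R) x : (exists z, In z L /\ z < x) ->
  exists w, In w L /\ w < x /\ forall z, In z L -> z < x -> z <= w.
Proof.
  induction L as [|u L IH]; intros (z & Hz & Hzx); [contradiction|].
  destruct (classic (exists z, In z L /\ z < x)) as [Hex|Hno].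
  - destruct (IH Hex) as (w & Hw & Hwx & Hmax). destruct (Rlt_dec w u) as [Hwu|Hwu].
    + destruct (Rlt_dec u x) as [Hux|Hux].
      * exists u. split; [left; auto|]. split; auto. intros z' [<-|Hz'] Hz'x; [lra|]. pose proof (Hmax z' Hz' Hz'x). lra.
      * exists w. split; [right; auto|]. split; auto. intros z' [<-|Hz'] Hz'x; [lra | auto].
    + exists w. split; [right; auto|]. split; auto. intros z' [<-|Hz'] Hz'x; [lra | auto].
  - exists u. destruct Hz as [<-|Hz]; [|exfalso; apply Hno; eauto].
    split; [left; auto|]. split; auto. intros z' [<-|Hz'] Hz'x; [lra | exfalso; apply Hno; eauto].
Qed.

Lemma list_min_above (L : list R) x : (exists z, In z L /\ x < z) ->
  exists w, In w L /\ x < w /\ forall z, In z L -> x < z -> w <= z.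
Proof.
  intro Hex. destruct (list_max_below (map Ropp L) (- x)) as (w & Hw & Hwx & Hmax).
  - destruct Hex as (z & Hz & Hxz). exists (- z). split; [apply in_map; auto | lra].
  - apply in_map_iff in Hw as (w' & <- & Hw'). exists w'. split; [auto|]. split; [lra|].
    intros z Hz Hxz. pose proof (Hmax (- z) (in_map _ _ _ Hz) ltac:(lra)). lra.
Qed.

Lemma listable_of_bounded (P : R -> Prop) N :
  (forall l, NoDup l -> (forall y, In y l -> P y) -> (length l <= N)%nat) ->
  exists L, forall y, P y <-> In y L.
Proof.
  intro HB.
  enough (forall d l, NoDup l -> (forall y, In y l -> P y) -> (N - length l <= d)%nat ->
            exists L, forall y, P y <-> In y L) by (apply (H N nil); [constructor | contradiction | lia]).
  induction d as [|d IH]; intros l Hnd Hl Hd;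
    (destruct (classic (forall y, P y -> In y l)) as [Hall|Hno]; [exists l; split; auto|]);
    apply not_all_ex_not in Hno as (y & Hy); apply imply_to_and in Hy as [Py Hny].
  - assert (length (y :: l) <= N)%nat by (apply HB; [constructor; auto | intros z [<-|Hz]; auto]).
    simpl in *. lia.
  - apply (IH (y :: l)); [constructor; auto | intros z [<-|Hz]; auto | simpl; lia].
Qed.

Lemma cut_mono A B C m m' y : cut A B C m y -> (m <= m')%nat -> cut A B C m' y.
Proof. intros (p & Hp & Hi) Hm. exists p. split; auto. lia. Qed.

Lemma new_cut_index A B C m y : cut A B C (S m) y -> ~ cut A B C m y -> has_index A B C y (S m).
Proof.
  intros (p & Hp & Hi) Hn. destruct (Nat.eq_dec p (S m)) as [->|Hne]; auto.
  exfalso; apply Hn; exists p; split; auto; lia.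
Qed.

Definition min_index A B C (x : R) (r : nat) : Prop :=
  has_index A B C x r /\ forall q, (q < r)%nat -> ~ has_index A B C x q.

Definition rank A B C (x : R) : nat := epsilon (inhabits 0%nat) (min_index A B C x).

Lemma rank_spec A B C x p : has_index A B C x p ->
  min_index A B C x (rank A B C x) /\ (rank A B C x <= p)%nat.
Proof.
  intro Hp.
  assert (Hex : exists r, min_index A B C x r).
  { induction p as [p IH] using (well_founded_induction Wf_nat.lt_wf).
    destruct (classic (exists q, (q < p)%nat /\ has_index A B C x q)) as [(q & Hq & Hi)|Hno].
    - exact (IH q Hq Hi).
    - exists p. split; auto. intros q Hq Hi. apply Hno. eauto. }
  pose proof (epsilon_spec (inhabits 0%nat) _ Hex) as Hmin. fold (rank A B C x) in Hmin.
  split; [exact Hmin|]. apply Nat.nlt_ge; intro. exact (proj2 Hmin p ltac:(lia) Hp).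
Qed.

Section Counting.

Variables A B C : pt.
Hypothesis Hnd : nondeg A B C.

Lemma cut_between x y r : has_index A B C x r -> has_index A B C y r -> x < y -> (1 <= r)%nat ->
  exists z, x < z < y /\ cut A B C (pred r) z.
Proof.
  intros Hx Hy Hxy Hr. destruct (between_equal_index A B C Hnd x y r Hx Hy Hxy Hr) as (z & p & Hz & Hp & Hi).
  exists z. split; auto. exists p. split; [lia | auto].
Qed.

Lemma gap_good_position xp xq x p q r : xp < x < xq -> has_index A B C xp p -> has_index A B C xq q ->
  (1 <= p < r)%nat -> (1 <= q < r)%nat -> min_index A B C x r ->
  (forall z, xp < z < xq -> ~ cut A B C (pred r) z) ->
  good_position A B C xp xq x p q r \/ good_position A B C xq xp x q p r.
Proof.
  intros Hx Hp Hq Hpr Hqr [Hr Hmin] Gap.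
  assert (Hpq : p <> q).
  { intros <-. destruct (cut_between xp xq p Hp Hq ltac:(lra) ltac:(lia)) as (z & Hz & Cz).
    apply (Gap z Hz), (cut_mono _ _ _ _ _ _ Cz). lia. }
  assert (Only : forall y, xp < y < xq -> cut A B C r y -> y = x).
  { intros y Hy Cy. assert (Er : r = S (pred r)) by lia.
    rewrite Er in Cy. pose proof (new_cut_index _ _ _ _ _ Cy (Gap y Hy)) as Iy. rewrite <- Er in Iy.
    destruct (Rtotal_order y x) as [Lt|[E|Gt]]; auto; exfalso;
      [destruct (cut_between y x r Iy Hr Lt ltac:(lia)) as (z & Hz & Cz)
      |destruct (cut_between x y r Hr Iy Gt ltac:(lia)) as (z & Hz & Cz)];
      apply (Gap z); auto; lra. }
  unfold good_position, strictly_between.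
  destruct (Nat.lt_total p q) as [Lt|[E|Gt]]; [left | lia | right];
    do 4 (split; [auto; lia|]).
  - split; [left; lra|]. intros y [Hy|Hy] Cy; [apply Only; auto | lra].
  - split; [right; lra|]. intros y [Hy|Hy] Cy; [lra | apply Only; auto].
Qed.

Variables (n : nat) (a b : R).
Hypothesis Hempty : forall y, a < y < b -> ~ cut A B C n y.

Definition inner_cut (m : nat) (y : R) : Prop := a < y < b /\ cut A B C m y.

Lemma inner_index_gt y p : a < y < b -> has_index A B C y p -> (n < p)%nat.
Proof. intros Hy Hi. apply Nat.nlt_ge; intro Hp. apply (Hempty y Hy). exists p. split; [lia | auto]. Qed.

Lemma inner_rank m x : inner_cut m x -> min_index A B C x (rank A B C x) /\ (n < rank A B C x <= m)%nat.
Proof.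
  intros [Jx (p & Hp & Ip)]. destruct (rank_spec A B C x p Ip) as [Hmin Hle].
  pose proof (inner_index_gt x _ Jx (proj1 Hmin)). split; [exact Hmin | lia].
Qed.

(** Between two new cutting points of [xi_(m+1)] lies an old one, so
    [xi_(m+1)] has at most [2 k + 1] cutting points in [J] if [xi_m] has [k]. *)
Lemma inner_cut_succ_bound m L : (forall y, inner_cut m y <-> In y L) ->
  forall l, NoDup l -> (forall y, In y l -> inner_cut (S m) y) -> (length l <= 2 * length L + 1)%nat.
Proof.
  intros HL l Hl_nd Hl.
  set (h := fun y => if excluded_middle_informative (cut A B C m y) then inl y else inr (count_below L y)).
  set (T := map inl L ++ map inr (seq 0 (S (length L)))).
  assert (HT : length T = (2 * length L + 1)%nat) by (unfold T; rewrite length_app, !length_map, length_seq; lia).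
  rewrite <- HT, <- (length_map h l). apply NoDup_incl_length.
  - apply NoDup_map_NoDup_ForallPairs; auto. intros x y Hx Hy E.
    destruct (Hl x Hx) as [Jx Cx]. destruct (Hl y Hy) as [Jy Cy]. unfold h in E.
    destruct (excluded_middle_informative (cut A B C m x)) as [Mx|Mx],
             (excluded_middle_informative (cut A B C m y)) as [My|My]; try discriminate; [congruence|].
    injection E as E.
    assert (Hnew : forall u v, In u l -> In v l -> u < v -> ~ cut A B C m u -> ~ cut A B C m v ->
                           (count_below L u < count_below L v)%nat).
    { intros u v Hu Hv Huv Mu Mv. destruct (Hl u Hu) as [Ju Cu]. destruct (Hl v Hv) as [Jv Cv].
      destruct (cut_between u v (S m) (new_cut_index _ _ _ _ _ Cu Mu) (new_cut_index _ _ _ _ _ Cv Mv)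
                  Huv ltac:(lia)) as (z & Hz & Cz).
      apply (count_below_lt L u v z); auto. apply HL. split; [lra | exact Cz]. }
    destruct (Rtotal_order x y) as [Lt|[Eq|Gt]]; auto; exfalso;
      [pose proof (Hnew x y Hx Hy Lt Mx My) | pose proof (Hnew y x Hy Hx Gt My Mx)]; lia.
  - intros w Hw. apply in_map_iff in Hw as (y & <- & Hy). destruct (Hl y Hy) as [Jy Cy].
    unfold h, T. apply in_or_app. destruct (excluded_middle_informative (cut A B C m y)).
    + left. apply in_map, HL. split; auto.
    + right. apply in_map, in_seq. pose proof (count_below_le L y). lia.
Qed.

Lemma inner_cuts_finite j : exists L, forall y, inner_cut (n + j) y <-> In y L.
Proof.
  induction j as [|j [L HL]].
  - exists nil. intro y. rewrite Nat.add_0_r. split; [intros [Jy Cy]; exact (Hempty y Jy Cy) | contradiction].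
  - rewrite Nat.add_succ_r. apply (listable_of_bounded _ (2 * length L + 1)).
    apply (inner_cut_succ_bound (n + j) L HL).
Qed.

Lemma good_triple_around x r : min_index A B C x r -> (n < r)%nat -> a < x < b ->
  (exists z, inner_cut (pred r) z /\ z < x) -> (exists z, inner_cut (pred r) z /\ x < z) ->
  exists xp xq p q, inner_cut (pred r) xp /\ inner_cut (pred r) xq /\ good_position A B C xp xq x p q r.
Proof.
  intros Hmin Hr Jx Hleft Hright.
  destruct (inner_cuts_finite (pred r - n)) as [L HL]. replace (n + (pred r - n))%nat with (pred r) in HL by lia.
  destruct (list_max_below L x) as (xp & Ip & Hpx & Wp).
  { destruct Hleft as (z & Hz & Hzx). exists z. split; [apply HL|]; auto. }
  destruct (list_min_above L x) as (xq & Iq & Hxq & Wq).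
  { destruct Hright as (z & Hz & Hxz). exists z. split; [apply HL|]; auto. }
  apply HL in Ip as [Jp (p & Hp & Ip)]. apply HL in Iq as [Jq (q & Hq & Iq)].
  assert (Gap : forall z, xp < z < xq -> ~ cut A B C (pred r) z).
  { intros z Hz Cz. assert (Lz : In z L) by (apply HL; split; [lra | auto]).
    destruct (Rtotal_order z x) as [Lt|[->|Gt]].
    - pose proof (Wp z Lz Lt). lra.
    - destruct Cz as (p' & Hp' & Ip'). apply (proj2 Hmin p'); auto. lia.
    - pose proof (Wq z Lz Gt). lra. }
  pose proof (inner_index_gt xp p Jp Ip). pose proof (inner_index_gt xq q Jq Iq).
  destruct (gap_good_position xp xq x p q r) as [G|G]; auto; try lia.
  - exists xp, xq, p, q. split; [split; [auto | exists p; auto]|].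
    split; [split; [auto | exists q; auto] | exact G].
  - exists xq, xp, q, p. split; [split; [auto | exists q; auto]|].
    split; [split; [auto | exists p; auto] | exact G].
Qed.

(** A point of [l] lacking a neighbour of level [rank x - 1] on one side is determined by its
    rank and that side: between two such points of equal rank there is one. *)
Lemma two_sided_point (l : list R) c : NoDup l -> (2 * c < length l)%nat ->
  (forall x, In x l -> inner_cut (n + c) x) ->
  exists x, In x l /\ (exists z, inner_cut (pred (rank A B C x)) z /\ z < x) /\
                      (exists z, inner_cut (pred (rank A B C x)) z /\ x < z).
Proof.
  intros Hl_nd Hlen Hl. apply NNPP; intro Hno.
  set (rk := rank A B C) in *.
  set (left := fun x => exists z, inner_cut (pred (rk x)) z /\ z < x).
  set (right := fun x => exists z, inner_cut (pred (rk x)) z /\ x < z).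
  set (g := fun x => (rk x, if excluded_middle_informative (left x) then true else false)).
  assert (Hbad : forall x, In x l -> ~ (left x /\ right x)) by (intros x Hx [HL HR]; apply Hno; eauto).
  assert (Sep : forall x y, In x l -> In y l -> x < y -> rk x = rk y -> left y /\ right x).
  { intros x y Hx Hy Hxy E. destruct (Hl x Hx) as [Jx _]. destruct (Hl y Hy) as [Jy _].
    destruct (inner_rank _ x (Hl x Hx)) as [[Ix _] Bx]. destruct (inner_rank _ y (Hl y Hy)) as [[Iy _] _].
    fold rk in Ix, Iy, Bx. rewrite <- E in Iy.
    destruct (cut_between x y (rk x) Ix Iy Hxy ltac:(lia)) as (z & Hz & Cz).
    split; exists z; [rewrite <- E|]; repeat split; auto; lra. }
  assert (Hinj : (length (map g l) <= length (list_prod (seq (S n) c) (true :: false :: nil)))%nat).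
  { apply NoDup_incl_length.
    - apply NoDup_map_NoDup_ForallPairs; auto. intros x y Hx Hy E. injection E as Er Eb.
      assert (Hlr : forall u w, In u l -> In w l -> u < w -> rk u = rk w ->
                (if excluded_middle_informative (left u) then true else false) =
                (if excluded_middle_informative (left w) then true else false) -> False).
      { intros u w Hu Hw Huw Ruw Buw. destruct (Sep u w Hu Hw Huw Ruw) as [Lw Ru].
        destruct (excluded_middle_informative (left u)) as [Lu|_], (excluded_middle_informative (left w)) as [_|NLw];
          try discriminate; [exact (Hbad u Hu (conj Lu Ru)) | exact (NLw Lw)]. }
      destruct (Rtotal_order x y) as [Lt|[Eq|Gt]]; auto; exfalso; [exact (Hlr x y Hx Hy Lt Er Eb) |].
      exact (Hlr y x Hy Hx Gt (eq_sym Er) (eq_sym Eb)).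
    - intros w Hw. apply in_map_iff in Hw as (x & <- & Hx). destruct (inner_rank _ x (Hl x Hx)) as [_ Bx].
      apply in_prod; [apply in_seq; fold rk in Bx; lia | destruct excluded_middle_informative; simpl; auto]. }
  rewrite length_map, length_prod, length_seq in Hinj. simpl in Hinj. lia.
Qed.

End Counting.

Theorem lemma2p1 (A B C : pt) (n c : nat) (a b : R) :
  nondeg A B C -> (1 <= c)%nat ->
  partition_interval A B C n a b ->
  (exists l : list R, length l = (4 + 2 * c)%nat /\ NoDup l /\
     forall x, In x l -> a < x < b /\ cut A B C (n + c) x) ->
  exists (xp xq xr : R) (p q r : nat),
    (a < xp < b /\ cut A B C (n + c) xp) /\
    (a < xq < b /\ cut A B C (n + c) xq) /\
    (a < xr < b /\ cut A B C (n + c) xr) /\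
    good_position A B C xp xq xr p q r.
Proof.
  intros Hnd _ (_ & _ & _ & Hempty) (l & Hlen & Hl_nd & Hl).
  destruct (two_sided_point A B C Hnd n a b Hempty l c Hl_nd ltac:(lia) Hl) as (x & Hx & Hleft & Hright).
  destruct (inner_rank A B C n a b Hempty _ x (Hl x Hx)) as [Hmin Bx]. destruct (Hl x Hx) as [Jx Cx].
  destruct (good_triple_around A B C Hnd n a b Hempty x _ Hmin ltac:(lia) Jx Hleft Hright)
    as (xp & xq & p & q & [Jp Cp] & [Jq Cq] & G).
  exists xp, xq, x, p, q, (rank A B C x).
  split; [split; [exact Jp | apply (cut_mono _ _ _ _ _ _ Cp); lia]|].
  split; [split; [exact Jq | apply (cut_mono _ _ _ _ _ _ Cq); lia]|].
  split; [split; assumption | exact G].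
Qed.
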